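(* Let $\Gamma$ be a Neumaier graph of valency $k$ with diameter $2$. Then $\Gamma$ has at most $\max\{1+k+k(k-2),\,2k\}$ vertices.
   Context: All graphs are finite, simple, undirected and connected. A graph is edge-regular with parameters $(n,k,\lambda)$ if it has $n$ vertices, is $k$-regular, and any two adjacent vertices have exactly $\lambda$ common neighbours. A clique $C$ is a regular clique with nexus $a$ if every vertex not in $C$ has exactly $a$ neighbours in $C$. A Neumaier graph is a non-complete edge-regular graph containing a regular clique. *)

From mathcomp Require Import all_boot all_order.
Set Implicit Arguments. Unset Strict Implicit. Unset Printing Implicit Defensive.

Definition simple_graph (T : finType) (e : rel T) : Prop :=
  symmetric e /\ irreflexive e.

Definition connected_graph (T : finType) (e : rel T) : Prop :=
  forall x y : T, connect e x y.

Definition nbhd (T : finType) (e : rel T) (x : T) : {set T} := [set y | e x y].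

Definition regular_graph (T : finType) (e : rel T) (k : nat) : Prop :=
  forall x : T, #|nbhd e x| = k.

Definition edge_regular (T : finType) (e : rel T) (n k lam : nat) : Prop :=
  #|T| = n /\ regular_graph e k /\
  forall x y : T, e x y -> #|nbhd e x :&: nbhd e y| = lam.

Definition complete_graph (T : finType) (e : rel T) : Prop :=
  forall x y : T, x != y -> e x y.

Definition is_clique (T : finType) (e : rel T) (C : {set T}) : Prop :=
  forall x y, x \in C -> y \in C -> x != y -> e x y.

Definition regular_clique (T : finType) (e : rel T) (C : {set T}) (a : nat) : Prop :=
  is_clique e C /\ forall v, v \notin C -> #|C :&: nbhd e v| = a.

Definition neumaier (T : finType) (e : rel T) (k : nat) : Prop :=
  simple_graph e /\ connected_graph e /\ ~ complete_graph e /\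
  (exists lam, edge_regular e #|T| k lam) /\
  exists (C : {set T}) (a : nat), C != set0 /\ regular_clique e C a.

Definition dist_le2 (T : finType) (e : rel T) (x y : T) : Prop :=
  x = y \/ e x y \/ exists z, e x z /\ e z y.

Definition diameter2 (T : finType) (e : rel T) : Prop :=
  (forall x y : T, dist_le2 e x y) /\
  exists x y : T, x != y /\ ~~ e x y /\ dist_le2 e x y.

From mathcomp Require Import all_boot all_order zify.

Set Implicit Arguments.
Unset Strict Implicit.
Unset Printing Implicit Defensive.

(* Let C be a regular clique with nexus a and m vertices. Connectedness forces
   a > 0 (otherwise no edge leaves C, so C is everything and the graph is
   complete), hence every vertex lies in C or is adjacent to C. A vertex of C
   has m - 1 neighbours inside C, so only k - (m - 1) outside, and the graph
   has at most m + m (k - m + 1) = m (k + 2 - m) vertices. *)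

Lemma card_bigcup_le (I T : finType) (P : {pred I}) (F : I -> {set T}) :
  #|\bigcup_(i in P) F i| <= \sum_(i in P) #|F i|.
Proof.
elim/big_ind2: _ => [|m A n B le_Am le_Bn|]; rewrite ?cards0 //.
exact: leq_trans (leq_card_setU A B) (leq_add le_Am le_Bn).
Qed.

Lemma card_le_cover (T : finType) (A B : {set T}) (S : T -> {set T}) m :
  (forall y, y \notin A -> exists2 z, z \in B & y \in S z) ->
  (forall z, z \in B -> #|S z| <= m) ->
  #|T| <= #|A| + #|B| * m.
Proof.
move=> covered le_Sm.
have sub_cover : [set: T] \subset A :|: \bigcup_(z in B) S z.
  apply/subsetP=> y _; rewrite in_setU; have [//|yA /=] := boolP (y \in A).
  by have [z zB yS] := covered y yA; apply/bigcupP; exists z.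
rewrite -cardsT; apply: leq_trans (subset_leq_card sub_cover) _.
apply: leq_trans (leq_card_setU _ _) _; rewrite leq_add2l.
apply: leq_trans (card_bigcup_le _ _) _.
by rewrite -sum_nat_const; apply: leq_sum.
Qed.

Section RegularClique.

Variables (T : finType) (e : rel T).
Hypothesis e_sym : symmetric e.
Variable C : {set T}.
Hypothesis C_clique : is_clique e C.

Lemma clique_setD1_subset_nbhd z : z \in C -> C :\ z \subset nbhd e z.
Proof.
move=> zC; apply/subsetP=> w; rewrite !inE => /andP[wz wC].
by rewrite C_clique // eq_sym.
Qed.

Lemma card_clique_le k : regular_graph e k -> #|C| <= k.+1.
Proof.
move=> e_reg; have [->|[z zC]] := set_0Vmem C; first by rewrite cards0.
rewrite (cardsD1 z C) zC add1n ltnS -(e_reg z).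
exact: subset_leq_card (clique_setD1_subset_nbhd zC).
Qed.

Lemma card_nbhd_clique_out k z : regular_graph e k -> z \in C ->
  #|nbhd e z :\: C| <= k - #|C|.-1.
Proof.
move=> e_reg zC; rewrite cardsD e_reg leq_sub2l //.
rewrite (cardsD1 z C) zC /=; apply: subset_leq_card.
by rewrite subsetI clique_setD1_subset_nbhd // subD1set.
Qed.

Lemma regular_clique_nexus_gt0 a :
  connected_graph e -> ~ complete_graph e -> C != set0 ->
  regular_clique e C a -> 0 < a.
Proof.
move=> e_conn e_ncomp /set0Pn[c cC] [_ nexus]; rewrite lt0n; apply/eqP=> a0.
have no_edge_out y z : y \notin C -> z \in C -> ~~ e y z.
  move=> yC zC; apply: contra_eqN (nexus y yC) => eyz.
  by rewrite a0 -lt0n card_gt0; apply/set0Pn; exists z; rewrite !inE zC.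
have C_closed : closed e C.
  move=> y z eyz; case yC: (y \in C); case zC: (z \in C) => //.
    by move: (no_edge_out z y (negbT zC) yC); rewrite e_sym eyz.
  by move: (no_edge_out y z (negbT yC) zC); rewrite eyz.
have in_C x : x \in C by rewrite -(closed_connect C_closed (e_conn c x)).
by apply: e_ncomp => x y; apply: C_clique.
Qed.

Lemma card_le_regular_clique k a : regular_graph e k ->
  regular_clique e C a -> 0 < a -> #|T| <= #|C| + #|C| * (k - #|C|.-1).
Proof.
move=> e_reg [_ nexus] a_gt0.
apply: (card_le_cover (S := fun z => nbhd e z :\: C)) => [y yC|z zC].
  have /set0Pn[z] : C :&: nbhd e y != set0 by rewrite -card_gt0 nexus.
  by rewrite !inE => /andP[zC eyz]; exists z; rewrite // !inE yC e_sym.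
exact: card_nbhd_clique_out.
Qed.

End RegularClique.

(* m (k + 2 - m) <= (k + 2)^2 / 4, which is at most k^2 - k + 1 for k >= 3
   and at most 2k for k <= 2. *)
Lemma leq_clique_count_max k m : 0 < m <= k.+1 ->
  m + m * (k - m.-1) <= maxn (1 + k + k * (k - 2)) (2 * k).
Proof. nia. Qed.

Theorem lemma3p2 (T : finType) (e : rel T) (k : nat) :
  neumaier e k -> diameter2 e ->
  #|T| <= maxn (1 + k + k * (k - 2)) (2 * k).
Proof.
move=> [[e_sym _] [e_conn [e_ncomp [[_ [_ [e_reg _]]] [C [a [C0 C_reg]]]]]]] _.
have C_clique := C_reg.1.
have a_gt0 := regular_clique_nexus_gt0 e_sym C_clique e_conn e_ncomp C0 C_reg.
apply: leq_trans (card_le_regular_clique e_sym C_clique e_reg C_reg a_gt0) _.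
apply: leq_clique_count_max.
by rewrite card_gt0 C0 (card_clique_le C_clique e_reg).
Qed.
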